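(* Let $\Gamma$ be a finite alphabet totally ordered via a valuation $v:\Gamma\to\mathbb{Z}$, and let $M_\Gamma$ be the set of $m$-words over $\Gamma$. Let $p,r\in\Gamma$ be arbitrary symbols and let $w_1,w_2$ be words over $\Gamma$ (one of which may be empty) such that $w=w_1\cdot p\cdot r\cdot p\cdot w_2\in M_\Gamma$. Then \[ w_1\cdot p\cdot r\cdot p\cdot w_2 \;=_{zip}\; w_1\cdot p\cdot w_2 . \]
   Context: $\Gamma$ is a finite set of symbols with a valuation $v:\Gamma\to\mathbb{Z}$ inducing a total order ($a<_\Gamma b$ iff $v(a)<v(b)$). An $m$-word is a word over $\Gamma$ of even (positive) length; $M_\Gamma$ is the set of all $m$-words, closed under concatenation $\cdot$. For $r,s\in\Gamma$ the distance is $\delta(r,s)=|v(r)-v(s)|$. The $\lambda$-length of an $m$-word $a_1a_2\cdots a_{2n}$ is the alternating sum $\lambda(a_1\cdots a_{2n})=-\delta(a_1,a_2)+\delta(a_2,a_3)-\delta(a_3,a_4)+\cdots-\delta(a_{2n-1},a_{2n})$. The compression relation $=_{zip}$ on $M_\Gamma$ is the equivalence relation obtained from the elementary rule: for all $p,r,s,t\in\Gamma$, $p\cdot r\cdot s\cdot t=_{zip}p\cdot t$ whenever $\lambda(p\cdot r\cdot s\cdot t)=\lambda(p\cdot t)$, applied iteratively to subwords and required to be preserved under concatenation: for all $w_1,w_2,w_3,w_4\in M_\Gamma$, if $w_1=_{zip}w_2$ and $w_3=_{zip}w_4$ then $w_1w_3=_{zip}w_2w_4$. *)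

From mathcomp Require Import all_boot all_order all_algebra.
Set Implicit Arguments. Unset Strict Implicit. Unset Printing Implicit Defensive.
Import Order.TTheory GRing.Theory Num.Theory.
Local Open Scope ring_scope.

Section Zip.
Variables (G : finType) (v : G -> int).

Definition delta (r s : G) : int := `|v r - v s|.

Definition mword (w : seq G) : bool := (0 < size w)%N && ~~ odd (size w).

Fixpoint lam_aux (sgn : bool) (a : G) (s : seq G) : int :=
  match s with
  | [::] => 0
  | b :: s' => (if sgn then delta a b else - delta a b) + lam_aux (~~ sgn) b s'
  end.

(* lambda(a1...a2n) = -d(a1,a2) + d(a2,a3) - ... - d(a_{2n-1},a_{2n}) *)
Definition lam (w : seq G) : int :=
  match w with [::] => 0 | a :: s => lam_aux false a s end.

Inductive zip_rel : seq G -> seq G -> Prop :=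
| zip_elem p r s t : lam [:: p; r; s; t] = lam [:: p; t] ->
    zip_rel [:: p; r; s; t] [:: p; t]
| zip_refl w : mword w -> zip_rel w w
| zip_sym w1 w2 : zip_rel w1 w2 -> zip_rel w2 w1
| zip_trans w1 w2 w3 : zip_rel w1 w2 -> zip_rel w2 w3 -> zip_rel w1 w3
| zip_cat w1 w2 w3 w4 : zip_rel w1 w2 -> zip_rel w3 w4 -> zip_rel (w1 ++ w3) (w2 ++ w4).

End Zip.

From Pilot Require Import Defs.
From mathcomp Require Import all_boot all_order all_algebra.
Import Order.TTheory GRing.Theory Num.Theory.

Set Implicit Arguments.
Unset Strict Implicit.

(* A back-and-forth step x y x contributes d(x,y) - d(y,x) = 0 to lambda, so
   the four-letter block containing it, aligned on an even position, is an
   elementary zip; parity of [w1] decides whether that block is [q p r p]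
   (q the last letter of [w1]) or [p r p t] (t the first letter of [w2]). *)

Section ZipContext.
Variables (G : finType) (v : G -> int).

Lemma deltaC (a b : G) : delta v a b = delta v b a.
Proof. by rewrite /delta distrC. Qed.

Lemma zip_rel_catl (c a b : seq G) :
  ~~ odd (size c) -> zip_rel v a b -> zip_rel v (c ++ a) (c ++ b).
Proof.
case: c => [|x c] ev_c ab //.
by apply: Defs.zip_cat => //; apply: zip_refl; rewrite /mword ev_c.
Qed.

Lemma zip_rel_catr (c a b : seq G) :
  ~~ odd (size c) -> zip_rel v a b -> zip_rel v (a ++ c) (b ++ c).
Proof.
case: c => [|x c] ev_c ab; first by rewrite !cats0.
by apply: Defs.zip_cat => //; apply: zip_refl; rewrite /mword ev_c.
Qed.

Lemma zip_rel_ctx (c d a b : seq G) :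
  zip_rel v a b -> ~~ odd (size c) -> ~~ odd (size d) ->
  zip_rel v (c ++ a ++ d) (c ++ b ++ d).
Proof. by move=> ab ev_c ev_d; apply/zip_rel_catl/zip_rel_catr. Qed.

Lemma zip_backtrack_last (q p r : G) : zip_rel v [:: q; p; r; p] [:: q; p].
Proof. by apply: zip_elem; rewrite /lam /= (deltaC r p) !addr0 subrr addr0. Qed.

Lemma zip_backtrack_first (p r t : G) : zip_rel v [:: p; r; p; t] [:: p; t].
Proof. by apply: zip_elem; rewrite /lam /= (deltaC r p) addKr. Qed.

End ZipContext.

Theorem proposition1 (G : finType) (v : G -> int) (hv : injective v)
    (p r : G) (w1 w2 : seq G) :
  mword (w1 ++ [:: p, r, p & w2]) ->
  @zip_rel G v (w1 ++ [:: p, r, p & w2]) (w1 ++ p :: w2).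
Proof.
rewrite /mword size_cat /= => /andP[_ ev_w].
have [odd_w1 | ev_w1] := boolP (odd (size w1)).
- case/lastP: w1 odd_w1 ev_w => [|w1 q] //; rewrite size_rcons /= => odd_w1 ev_w.
  rewrite -!cats1 -!catA /=.
  rewrite -[[:: q, p, r, p & w2]]/([:: q; p; r; p] ++ w2).
  rewrite -[[:: q, p & w2]]/([:: q; p] ++ w2).
  apply: zip_rel_ctx (zip_backtrack_last v q p r) _ _ => //.
  by move: odd_w1 ev_w; rewrite !oddD /=; case: (odd (size w1)); case: (odd (size w2)).
- case: w2 ev_w => [|t w2] ev_w; first by move: ev_w ev_w1; rewrite oddD /=; case: odd.
  rewrite -[[:: p, r, p, t & w2]]/([:: p; r; p; t] ++ w2).
  rewrite -[p :: t :: w2]/([:: p; t] ++ w2).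
  apply: zip_rel_ctx (zip_backtrack_first v p r t) _ _ => //.
  by move: ev_w ev_w1; rewrite !oddD /=; case: (odd (size w1)); case: (odd (size w2)).
Qed.
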